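(* Let $p\geq1$, $\mu>0$, and let $g:\mathbb{R}^n\to\mathbb{R}\cup\{+\infty\}$ be convex. Let $\lambda^{\ast}$ be the optimal solution of $$\min_{\lambda\in\mathbb{R}^n}\Big\{g(\lambda)+\frac{\mu}{1+\frac1p}\lVert\lambda\rVert^{1+\frac1p}\Big\},$$ and suppose $\lambda^{\ast}=0$. Let $\lambda^k\in\mathbb{R}^n$ with $\lVert\lambda^k\rVert>0$, set $t^k=\lVert\lambda^k\rVert^{\frac1p-1}$, and let $$\lambda^{k+1}=\arg\min_{\lambda\in\mathbb{R}^n}\Big\{g(\lambda)+\frac{\mu}{2}t^k\lVert\lambda\rVert^2\Big\}.$$ Then $\lambda^{k+1}=\lambda^{\ast}$ (i.e. $\lambda^{k+1}=0$).
   Context: $\lVert\cdot\rVert$ is the Euclidean norm. The minimizers above are assumed to exist. This is one step of the fixed point iteration: given $\lambda^k$, set $t^k=\lVert\lambda^k\rVert^{1/p-1}$ if $\lambda^k\neq0$ and $t^k=0$ otherwise, and $\lambda^{k+1}=\arg\min_\lambda\{g(\lambda)+\frac{\mu}{2}t^k\lVert\lambda\rVert^2\}$. *)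

From mathcomp Require Import all_boot all_order all_algebra.
From mathcomp Require Import all_classical all_reals all_analysis.
Set Implicit Arguments. Unset Strict Implicit. Unset Printing Implicit Defensive.
Import Order.TTheory GRing.Theory Num.Theory.
Local Open Scope ring_scope.

Definition enorm (R : realType) (n : nat) (x : 'rV[R]_n) : R :=
  Num.sqrt (\sum_(i < n) x ord0 i ^+ 2).

Definition convex_ext (R : realType) (n : nat) (g : 'rV[R]_n -> \bar R) : Prop :=
  (forall x, g x != -oo%E) /\
  forall (x y : 'rV[R]_n) (t : R), 0 <= t <= 1 ->
    (g ((t *: x + (1 - t) *: y)%R) <= t%:E * g x + (1 - t)%:E * g y)%E.

Definition is_argmin (R : realType) (n : nat) (F : 'rV[R]_n -> \bar R) (x : 'rV[R]_n) : Prop :=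
  forall y, (F x <= F y)%E.

From mathcomp Require Import all_boot all_order all_algebra.
From mathcomp Require Import all_classical all_reals all_analysis.
From mathcomp Require Import lra.
Set Implicit Arguments. Unset Strict Implicit. Unset Printing Implicit Defensive.
Import Order.TTheory GRing.Theory Num.Theory.
Import numFieldNormedType.Exports.
Local Open Scope classical_set_scope.
Local Open Scope ring_scope.

(* Convexity on the segment [0, y] gives g(t y) <= t g(y) + (1 - t) g(0), while
   minimality of 0 for g + h gives g(0) <= g(t y) + t^d h(y); hence
   g(0) <= g(y) + t^(d-1) h(y), and since d > 1 the penalty vanishes as t -> 0+,
   so 0 already minimizes g.  A penalty that is positive away from 0 then forces
   every minimizer x of g + c |.|^2 to satisfy g(x) + c |x|^2 <= g(0) <= g(x),
   i.e. x = 0. *)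

Section EuclideanNorm.
Variables (R : realType) (n : nat).
Implicit Types (x : 'rV[R]_n) (t : R).

Lemma enorm_ge0 x : 0 <= enorm x.
Proof. exact: sqrtr_ge0. Qed.

Lemma enormZ t x : enorm (t *: x) = `|t| * enorm x.
Proof.
rewrite /enorm; under eq_bigr => i _ do rewrite mxE exprMn.
by rewrite -mulr_sumr sqrtrM ?sqrtr_sqr // sqr_ge0.
Qed.

Lemma enorm_eq0 x : (enorm x == 0) = (x == 0).
Proof.
have sq_ge0 i : 0 <= x ord0 i ^+ 2 by exact: sqr_ge0.
rewrite /enorm sqrtr_eq0 le_eqVlt ltNge sumr_ge0 ?orbF //.
apply/idP/eqP => [|->]; last by rewrite big1 // => i _; rewrite mxE expr0n.
rewrite psumr_eq0 // => /allP x0; apply/rowP => i.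
by rewrite !mxE; apply/eqP; rewrite -sqrf_eq0; exact: x0 (mem_index_enum i).
Qed.

Lemma enorm0 : enorm (0 : 'rV[R]_n) = 0.
Proof. by apply/eqP; rewrite enorm_eq0. Qed.

Lemma enorm_gt0 x : (0 < enorm x) = (x != 0).
Proof. by rewrite lt_def enorm_eq0 enorm_ge0 andbT. Qed.

Lemma enormZ_powR t x d : 0 <= t -> enorm (t *: x) `^ d = t `^ d * enorm x `^ d.
Proof. by move=> t_ge0; rewrite enormZ ger0_norm // powRM // enorm_ge0. Qed.

End EuclideanNorm.

Section ConvexRegularization.
Variables (R : realType) (n : nat) (g : 'rV[R]_n -> \bar R).

Lemma is_argmin0_add_homogeneous (h : 'rV[R]_n -> R) (d : R) :
  convex_ext g -> 1 < d ->
  (forall t x, 0 <= t -> h (t *: x) = t `^ d * h x) ->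
  is_argmin (fun x => g x + (h x)%:E)%E 0 -> is_argmin g 0.
Proof.
move=> [g_fin g_cvx] d_gt1 h_hom gh_min y.
have d1_gt0 : 0 < d - 1 by rewrite subr_gt0.
have d_gt0 : 0 < d by apply: lt_trans d_gt1.
have h0 : h 0 = 0 by rewrite -(scale0r 0) h_hom // powR0 ?mul0r // gt_eqF.
case gy: (g y) => [b| |]; [|exact: leey|by have := g_fin y; rewrite gy].
case g0: (g 0) => [a| |]; last 2 first.
- by have := gh_min y; rewrite g0 gy h0 adde0 -EFinD leye_eq.
- by have := g_fin 0; rewrite g0.
rewrite lee_fin.
have le_a_near0 t : 0 < t <= 1 -> a <= b + t `^ (d - 1) * h y.
  move=> /andP[t_gt0 t_le1].
  have := g_cvx y 0 t; rewrite t_le1 (ltW t_gt0) /= scaler0 addr0 gy g0 => /(_ isT) cvx.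
  have := gh_min (t *: y); rewrite g0 h0 adde0 (h_hom _ _ (ltW t_gt0)).
  move=> /le_trans /(_ (leeD2r _ cvx)); rewrite -!EFinM -!EFinD lee_fin.
  move=> le_a; rewrite -(mulr_powRB1 (ltW t_gt0) d_gt0) in le_a.
  by rewrite -(ler_pM2l t_gt0); lra.
have cvg_b : b + t `^ (d - 1) * h y @[t --> 0^'+] --> b.
  rewrite -[X in _ --> X]addr0 -[X in _ --> b + X](mul0r (h y)).
  by apply: cvgD; [exact: cvg_cst|exact: cvgM (powR_cvg0 d1_gt0) (cvg_cst _)].
rewrite -(cvg_lim _ cvg_b) //; apply: limr_ge; first by apply/cvg_ex; exists b.
near=> t; apply: le_a_near0; apply/andP; split; near: t; first exact: nbhs_right_gt.
exact: nbhs_right_le.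
Unshelve. all: by end_near.
Qed.

Lemma is_argmin_add_penalty_eq (h : 'rV[R]_n -> R) (x0 x : 'rV[R]_n) :
  is_argmin g x0 -> g x0 \is a fin_num -> h x0 = 0 -> (forall y, y != x0 -> 0 < h y) ->
  is_argmin (fun y => g y + (h y)%:E)%E x -> x = x0.
Proof.
move=> g_min /EFin_fin_numP[a ga] hx0 h_pos gh_min.
apply/eqP; apply: contraT => x_neq.
have := gh_min x0; have := g_min x; rewrite ga hx0 adde0.
case: (g x) => [b| |] //=; rewrite ?lee_fin -?EFinD ?lee_fin => a_le_b b_le_a.
by have := h_pos x x_neq; lra.
Qed.

End ConvexRegularization.

Theorem theorem4p1 (R : realType) (n : nat) (p mu : R) (g : 'rV[R]_n -> \bar R)
  (lamk lamk1 : 'rV[R]_n) :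
  1 <= p -> 0 < mu -> convex_ext g ->
  (g (0%R : 'rV[R]_n) < +oo)%E ->
  is_argmin (fun l => (g l + (mu / (1 + p^-1) * (enorm l `^ (1 + p^-1)))%:E)%E) (0%R : 'rV[R]_n) ->
  0 < enorm lamk ->
  is_argmin (fun l => (g l + (mu / 2 * (enorm lamk `^ (p^-1 - 1)) * enorm l ^+ 2)%:E)%E) lamk1 ->
  lamk1 = (0%R : 'rV[R]_n).
Proof.
move=> p_ge1 mu_gt0 g_cvx g0_lt g_reg_min lamk_gt0 lamk1_min.
have p_gt0 : 0 < p by apply: lt_le_trans p_ge1.
have g_min : is_argmin g 0.
  apply: (is_argmin0_add_homogeneous (d := 1 + p^-1) g_cvx _ _ g_reg_min).
  - by rewrite ltrDl invr_gt0.
  - by move=> t x t_ge0; rewrite enormZ_powR // mulrCA.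
apply: (is_argmin_add_penalty_eq g_min _ _ _ lamk1_min).
- by rewrite fin_numE -ltey g0_lt andbT (g_cvx.1 0).
- by rewrite enorm0 expr0n mulr0.
- move=> y y_neq0.
  apply: mulr_gt0; last by apply: exprn_gt0; rewrite enorm_gt0.
  by rewrite mulr_gt0 ?divr_gt0 ?powR_gt0.
Qed.
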